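(* For all positive integers $n,m,L$ with $L\le m$ and all $M\in[0,m)$, \[ \frac{R^{\rm LC}(M,L)}{R^{\rm lb}(M,L)}\le 18, \] where \[ R^{\rm lb}(M,L)=\max\left\{\max_{s\in\{1,\dots,\min\{\lfloor m/L\rfloor,\,n\}\}}\left(Ls-\frac{sM}{\left\lfloor \lfloor m/L\rfloor / s\right\rfloor}\right),\ \frac{m-M}{\lceil m/L\rceil}\right\}. \]
   Context: Setting: server with library of $m$ files of $B$ bits each, $n$ users each with a cache of $M$ files, each user requesting $L$ distinct files; $\mathbf F$ is the $L\times n$ request matrix. For $M$ such that $t=nM/m$ is an integer, each file is split into $\binom nt$ packets $W_{f,\mathcal T}$ indexed by $t$-subsets $\mathcal T$ of users, and user $u$ caches the packets with $u\in\mathcal T$. The directed conflict graph $\mathcal H^d_{\mathbf F}$ has one vertex for each pair (packet $(f,\mathcal T)$, user $u$) with $f$ requested by $u$ and $u\notin\mathcal T$, and a directed edge from vertex $v_2$ to $v_1$ iff their packets differ and the packet of $v_1$ is not cached by the user of $v_2$. The directed local chromatic number $\chi_l(\mathcal H^d)$ is the minimum over proper colorings $c$ of the underlying undirected graph of $\max_v$ (number of distinct colors on the closed out-neighborhood of $v$, i.e. $v$ and its out-neighbors). For integer $t$, $R^{\rm LC}(M,L)=\max_{\mathbf F}\chi_l(\mathcal H^d_{\mathbf F})/\binom nt$ (in file units); for other $M\in[0,m]$, $R^{\rm LC}(M,L)$ is the rate obtained by memory sharing, i.e. the lower convex envelope in $M$ of the values at the points $M=tm/n$, $t=0,1,\dots,n$.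 *)

From HB Require Import structures.
From mathcomp Require Import all_boot all_order all_algebra.
Set Implicit Arguments. Unset Strict Implicit. Unset Printing Implicit Defensive.
Import Order.TTheory GRing.Theory Num.Theory.

Section CodedCaching.
Variables (n m L : nat).

(* A request matrix: L x n, entry (j,u) = j-th file requested by user u. *)
Definition request_matrix := 'M['I_m]_(L, n).

Definition valid_request (F : request_matrix) : bool :=
  [forall u : 'I_n, injectiveb (fun j : 'I_L => F j u)].

Definition requested (F : request_matrix) (u : 'I_n) (f : 'I_m) : bool :=
  [exists j : 'I_L, F j u == f].

(* candidate vertices: ((file f, subset T), user u) *)
Notation vtx := ((('I_m * {set 'I_n}) * 'I_n)%type).

Definition is_vertex (F : request_matrix) (t : nat) (v : vtx) : bool :=
  [&& #|v.1.2| == t, v.2 \notin v.1.2 & requested F v.2 v.1.1].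

(* directed edge v2 -> v1: packets differ and the packet of v1 is not cached
   by the user of v2 (user u caches W_{f,T} iff u \in T) *)
Definition arc (v2 v1 : vtx) : bool :=
  (v1.1 != v2.1) && (v2.2 \notin v1.1.2).

Definition proper_col (F : request_matrix) (t : nat) (K : eqType) (c : vtx -> K) :=
  [forall v : vtx, forall w : vtx,
     (is_vertex F t v && is_vertex F t w && (arc v w || arc w v)) ==> (c v != c w)].

Definition local_colors (F : request_matrix) (t : nat) (K : finType) (c : vtx -> K)
  (v : vtx) : nat :=
  #|c @: [set w : vtx | is_vertex F t w && ((w == v) || arc v w)]|.

(* directed local chromatic number; #|{: vtx}| colours always suffice (any proper
   colouring can be injectively relabelled onto at most #|vertices| colours
   without changing any local colour count), and #|{: vtx}| bounds the value. *)
Definition chi_l (F : request_matrix) (t : nat) : nat :=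
  \big[minn/#|{: vtx}|]_(c : {ffun vtx -> 'I_#|{: vtx}|} | proper_col F t c)
     \max_(v : vtx | is_vertex F t v) local_colors F t c v.

Variable R : realFieldType.
Local Open Scope ring_scope.

Definition RLC_pt (t : nat) : R :=
  (\max_(F : request_matrix | valid_request F) chi_l F t)%:R / ('C(n, t))%:R.

Definition xpt (t : nat) : R := t%:R * m%:R / n%:R.

Definition interp (t1 t2 : nat) (M : R) : R :=
  ((xpt t2 - M) * RLC_pt t1 + (M - xpt t1) * RLC_pt t2) / (xpt t2 - xpt t1).

(* lower convex envelope (memory sharing) at a non-grid point M in (0,m):
   minimum over pairs of grid points around M of the linear interpolation *)
Definition envelope (M : R) : R :=
  \big[Num.min/interp 0 n M]_(t1 : 'I_n.+1)
     \big[Num.min/interp 0 n M]_(t2 : 'I_n.+1 | (xpt t1 < M) && (M < xpt t2))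
        interp t1 t2 M.

Definition RLC (M : R) : R :=
  match [pick t : 'I_n.+1 | M * n%:R == t%:R * m%:R] with
  | Some t => RLC_pt t
  | None => envelope M
  end.

Definition Rlb (M : R) : R :=
  let q := (m %/ L)%N in
  \big[Num.max/(m%:R - M) / ((m + L.-1) %/ L)%N%:R]_(1 <= s < (minn q n).+1)
     ((L * s)%N%:R - s%:R * M / (q %/ s)%N%:R).

End CodedCaching.

From Pilot Require Import Defs.
From HB Require Import structures.
From mathcomp Require Import all_boot all_order all_algebra.
From mathcomp Require Import ring lra zify.
Set Implicit Arguments. Unset Strict Implicit. Unset Printing Implicit Defensive.
Import Order.TTheory GRing.Theory Num.Theory.
Local Open Scope ring_scope.

(* Two explicit proper colourings of the conflict graph bound
   its directed local chromatic number at every grid point t: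
   - colouring a vertex by its packet (f,T) shows chi_l <= m * C(n-1,t),
     i.e. R^LC(t m/n) <= (m/n) (n - t);
   - colouring a vertex ((f,T),u) by (position of f in u's request, T + u)
     shows chi_l <= L * C(n,t+1), i.e. R^LC(t m/n) <= L (n - t)/(t+1).
   Both bounds are affine in t on each memory-sharing cell, so memory sharing
   turns them into R^LC(M) <= m - M and R^LC(M) <= L/(t+1) (n - nM/m) for the
   cell t m <= n M < (t+1) m; the latter yields R^LC m <= L n (m - M) and
   R^LC M <= L (m - M).

   R^lb dominates (m - M)/ceil(m/L), and Ls/2 for every
   admissible s with 4 s M <= L floor(m/L).  A case analysis on the size of
   M and of ceil(m/L), with s chosen maximal, compares the two sides. *)

Section ConflictGraphColourings.
Variables (n m L : nat) (F : request_matrix n m L) (t : nat).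
Hypotheses (n_gt0 : (0 < n)%N) (m_gt0 : (0 < m)%N).
Notation vtx := ((('I_m * {set 'I_n}) * 'I_n)%type).
Notation closed_out v :=
  [set w : vtx | is_vertex F t w && ((w == v) || Defs.arc v w)].

(* Any proper colouring, with colours in an arbitrary finite type, whose
   closed out-neighbourhoods see at most B colours witnesses chi_l <= B:
   relabel the colours injectively into the index type used by chi_l. *)
Lemma chi_l_le_colouring (K : finType) (k : vtx -> K) (B : nat) :
  (forall v w, is_vertex F t v -> is_vertex F t w ->
     Defs.arc v w || Defs.arc w v -> k v != k w) ->
  (forall v, is_vertex F t v -> (#|k @: closed_out v| <= B)%N) ->
  (chi_l F t <= B)%N.
Proof.
move=> k_proper k_local.
pose v0 : vtx := ((Ordinal m_gt0, set0), Ordinal n_gt0).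
pose h (x : K) : 'I_#|{: vtx}| := enum_rank (odflt v0 [pick w | k w == x]).
pose c := [ffun v => h (k v)].
have h_inj v w : h (k v) = h (k w) -> k v = k w.
  move=> /enum_rank_inj.
  case: pickP => [x /eqP <-|/(_ v)]; last by rewrite eqxx.
  by case: pickP => [y /eqP <- /= ->|/(_ w)]; last by rewrite eqxx.
have c_proper : proper_col F t c.
  apply/forallP => v; apply/forallP => w; apply/implyP.
  move=> /andP[/andP[Hv Hw] Harc]; rewrite !ffunE.
  by apply: contra (k_proper v w Hv Hw Harc) => /eqP /h_inj ->.
apply: (@leq_trans (\max_(v | is_vertex F t v) local_colors F t c v)).
  by rewrite /chi_l -minEnat; exact: (@bigmin_le_cond _ nat _ _ c).
apply/bigmax_leqP => v Hv; apply: leq_trans (k_local v Hv); rewrite /local_colors.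
have -> : c @: closed_out v = h @: (k @: closed_out v).
  by rewrite -imset_comp; apply: eq_imset => x; rewrite ffunE.
exact: leq_imset_card.
Qed.

(* Colouring by packet: the closed out-neighbourhood of ((f,T),u) only holds
   packets not cached by u, i.e. (f',T') with u \notin T'. *)
Lemma chi_l_le_packets : (chi_l F t <= m * 'C(n.-1, t))%N.
Proof.
apply: (@chi_l_le_colouring _ (fun v : vtx => v.1)).
  by move=> v w _ _ /orP[] /andP[]; rewrite // eq_sym.
move=> v /and3P[_ u_notin_T _].
pose S := [set T : {set 'I_n} | T \subset [set~ v.2] & #|T| == t].
apply: (@leq_trans #|setX [set: 'I_m] S|); last first.
  by rewrite cardsX cardsT card_ord cards_draws cardsC1 card_ord.
apply: subset_leq_card; apply/subsetP => p /imsetP[w].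
rewrite inE => /andP[/and3P[w_size _ _] w_out] ->.
rewrite !inE /= w_size andbT; apply/subsetP => x x_in; rewrite !inE.
case/orP: w_out => [/eqP w_v|/andP[_ u_notin]].
  by move: x_in; rewrite w_v; apply: contraTneq => ->.
by apply: contraNneq u_notin => <-.
Qed.

Variable (L_gt0 : (0 < L)%N).

Definition slot_colour (v : vtx) : 'I_L * {set 'I_n} :=
  (odflt (Ordinal L_gt0) [pick j | F j v.2 == v.1.1], v.2 |: v.1.2).

(* Two vertices joined by an arc have distinct slot colours: equal colours
   force the same user (the source's user lies outside the target's set), hence
   the same set T and the same file, i.e. the same packet. *)
Lemma slot_colour_arc v w : is_vertex F t v -> is_vertex F t w ->
  Defs.arc v w -> slot_colour v != slot_colour w.
Proof.
move=> /and3P[_ v_out v_req] /and3P[_ w_out w_req] /andP[packet_ne v_notin].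
apply/negP => /eqP [same_slot same_set].
have same_user : v.2 = w.2.
  have : v.2 \in w.2 |: w.1.2 by rewrite -same_set setU11.
  by rewrite in_setU (negbTE v_notin) orbF => /set1P.
have same_T : v.1.2 = w.1.2.
  by rewrite -(setU1K v_out) -(setU1K w_out) same_set same_user.
move: same_slot v_req w_req; rewrite /requested -same_user.
case: pickP => [j /eqP Fj|nFj]; last first.
  by move=> _ /existsP[j Fj]; move: (nFj j); rewrite Fj.
case: pickP => [j' /eqP Fj'|nFj']; last first.
  by move=> _ _ /existsP[j2 Fj2]; move: (nFj' j2); rewrite Fj2.
move=> /= same_j _ _; move: packet_ne Fj Fj' same_T.
case: (v.1) => [f1 T1]; case: (w.1) => [f2 T2] /= packet_ne Fj Fj' same_T.
by rewrite -Fj -Fj' same_T same_j eqxx in packet_ne.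
Qed.

Lemma chi_l_le_slots : (chi_l F t <= L * 'C(n, t.+1))%N.
Proof.
apply: (@chi_l_le_colouring _ slot_colour).
  move=> v w Hv Hw /orP[Hvw|Hwv]; first exact: slot_colour_arc.
  by rewrite eq_sym; apply: slot_colour_arc.
move=> v _.
pose S := [set T : {set 'I_n} | #|T| == t.+1].
apply: (@leq_trans #|setX [set: 'I_L] S|); last first.
  by rewrite cardsX cardsT card_ord card_draws card_ord.
apply: subset_leq_card; apply/subsetP => p /imsetP[w].
rewrite inE => /andP[/and3P[w_size w_out _] _] ->.
by rewrite !inE /= cardsU1 w_out (eqP w_size).
Qed.

End ConflictGraphColourings.

Lemma ler_nat_ratio (R : realFieldType) (a c b d : nat) :
  (0 < c)%N -> (0 < d)%N -> (a * d <= b * c)%N ->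
  (a%:R / c%:R : R) <= b%:R / d%:R.
Proof.
move=> c_gt0 d_gt0 cross.
by rewrite ler_pdivrMr ?ltr0n // mulrAC ler_pdivlMr ?ltr0n // -!natrM ler_nat.
Qed.

Lemma interpolation_le_affine (R : realFieldType) (x1 x2 M r1 r2 p k : R) :
  x1 < M -> M < x2 -> r1 <= p + k * x1 -> r2 <= p + k * x2 ->
  ((x2 - M) * r1 + (M - x1) * r2) / (x2 - x1) <= p + k * M.
Proof.
move=> x1M Mx2 r1_le r2_le.
have x12 : 0 < x2 - x1 by lra.
rewrite ler_pdivrMr //.
have -> : (p + k * M) * (x2 - x1) =
          (x2 - M) * (p + k * x1) + (M - x1) * (p + k * x2) by ring.
by apply: lerD; apply: ler_wpM2l => //; lra.
Qed.

Lemma below_scaled_bound (R : realFieldType) (X Y tau s : R) :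
  0 <= Y -> 0 <= tau -> tau < s -> 1 <= s -> X * s <= Y ->
  X <= Y /\ X * tau <= Y.
Proof. by move=> Y_ge0 tau_ge0 tau_lt_s s_ge1 Xs_le; split; nra. Qed.

Section MemorySharing.
Variables (R : realFieldType) (n m L : nat).
Hypotheses (n_gt0 : (0 < n)%N) (m_gt0 : (0 < m)%N) (L_gt0 : (0 < L)%N).

Let n_neq0 : (n%:R : R) != 0. Proof. by rewrite pnatr_eq0 -lt0n. Qed.
Let m_neq0 : (m%:R : R) != 0. Proof. by rewrite pnatr_eq0 -lt0n. Qed.
Let n_gt0R : (0 : R) < n%:R. Proof. by rewrite ltr0n. Qed.
Let m_gt0R : (0 : R) < m%:R. Proof. by rewrite ltr0n. Qed.

Lemma RLC_pt_le_packets (t : nat) : (t <= n)%N ->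
  RLC_pt n m L R t <= m%:R / n%:R * (n%:R - t%:R).
Proof.
move=> t_le_n.
apply: (@le_trans _ _ ((m * (n - t))%N%:R / n%:R)); last first.
  by rewrite natrM natrB // mulrAC.
apply: ler_nat_ratio => //; first by rewrite bin_gt0.
apply: (@leq_trans (m * 'C(n.-1, t) * n)).
  by apply: leq_mul (leqnn _); apply/bigmax_leqP => F _; apply: chi_l_le_packets.
by rewrite -mulnA [('C(_, _) * n)%N]mulnC mul_bin_down mulnA.
Qed.

Lemma RLC_pt_le_slots (t : nat) : (t <= n)%N ->
  RLC_pt n m L R t <= L%:R / t.+1%:R * (n%:R - t%:R).
Proof.
move=> t_le_n.
apply: (@le_trans _ _ ((L * (n - t))%N%:R / t.+1%:R)); last first.
  by rewrite natrM natrB // mulrAC.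
apply: ler_nat_ratio => //; first by rewrite bin_gt0.
apply: (@leq_trans (L * 'C(n, t.+1) * t.+1)).
  by apply: leq_mul (leqnn _); apply/bigmax_leqP => F _; apply: chi_l_le_slots.
by rewrite -mulnA [('C(_, _) * t.+1)%N]mulnC mul_bin_left mulnA.
Qed.

Lemma memory_cell (M : R) : 0 <= M -> M < m%:R ->
  exists2 t, (t < n)%N & t%:R * m%:R <= M * n%:R < t.+1%:R * m%:R.
Proof.
move=> M_ge0 M_lt_m.
have in_cell_lt_n t : t%:R * m%:R <= M * n%:R -> (t < n)%N.
  move=> tM; rewrite -(ltr_nat R) -(ltr_pM2r m_gt0R).
  by apply: le_lt_trans tM _; rewrite mulrC ltr_pM2l ?ltr0n.
pose below (t : nat) := t%:R * m%:R <= M * n%:R.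
have below0 : exists t, below t by exists 0%N; rewrite /below mul0r mulr_ge0.
have below_le_n t : below t -> (t <= n)%N by move/in_cell_lt_n/ltnW.
case: (ex_maxnP below0 below_le_n) => t t_in t_max.
exists t; first exact: in_cell_lt_n.
apply/andP; split=> //; rewrite ltNge; apply/negP => /t_max; by rewrite ltnn.
Qed.

Lemma RLC_le_on_cell (M c : R) (t : nat) : (t < n)%N ->
  t%:R * m%:R <= M * n%:R -> M * n%:R < t.+1%:R * m%:R ->
  RLC_pt n m L R t <= c * (n%:R - t%:R) ->
  RLC_pt n m L R t.+1 <= c * (n%:R - t.+1%:R) ->
  RLC n m L M <= c * (n%:R - n%:R * M / m%:R).
Proof.
move=> t_lt_n cell_lo cell_hi at_t at_t1.
rewrite /RLC; case: pickP => [t' /eqP grid | off_grid].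
  have t'E : t' = t :> nat.
    apply/eqP; rewrite eqn_leq -ltnS -(ltr_nat R) -(ler_nat R).
    by rewrite -(ltr_pM2r m_gt0R) -(ler_pM2r m_gt0R) -grid cell_hi cell_lo.
  by rewrite [n%:R * M]mulrC grid mulfK // t'E.
(* Otherwise M lies strictly inside the cell and the envelope is at most
   the interpolation between the grid points t and t+1. *)
have t_ord : (t < n.+1)%N by rewrite ltnS ltnW.
have t_cell : t%:R * m%:R < M * n%:R.
  rewrite lt_neqAle cell_lo andbT eq_sym.
  by have := off_grid (inord t); rewrite inordK // => ->.
set k := - c * n%:R / m%:R.
have affine_xpt s : c * n%:R + k * xpt n m R s = c * (n%:R - s%:R).
  by rewrite /k /xpt; field; rewrite n_neq0 m_neq0.
have affineM : c * n%:R + k * M = c * (n%:R - n%:R * M / m%:R).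
  by rewrite /k; field.
rewrite -affineM /envelope.
apply: le_trans (bigmin_le _ (inord t) _) _.
have in_range : (xpt n m R (inord t : 'I_n.+1) < M) &&
                (M < xpt n m R (inord t.+1 : 'I_n.+1)).
  rewrite /xpt !inordK // ltr_pdivrMr // ltr_pdivlMr //.
  by rewrite t_cell cell_hi.
pose brackets (t2 : 'I_n.+1) :=
  (xpt n m R (inord t : 'I_n.+1) < M) && (M < xpt n m R t2).
apply: le_trans (bigmin_le_cond _ _ (in_range : brackets (inord t.+1))) _.
have [lo hi] := andP in_range.
by rewrite /interp; apply: interpolation_le_affine; rewrite // affine_xpt inordK.
Qed.

(* The memory-sharing upper bounds used in the comparison: the packet bound
   gives m - M; the slot bound X (t+1) <= L (n - tau), with tau = n M/m in
   [0, t+1), gives both X <= L (n - tau) and X tau <= L (n - tau). *)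
Lemma RLC_upper_bounds (M : R) : 0 <= M -> M < m%:R ->
  [/\ RLC n m L M <= m%:R - M,
      RLC n m L M * m%:R <= L%:R * n%:R * (m%:R - M)
    & RLC n m L M * M <= L%:R * (m%:R - M)].
Proof.
move=> M_ge0 M_lt_m.
have [t t_lt_n /andP[cell_lo cell_hi]] := memory_cell M_ge0 M_lt_m.
set tau := n%:R * M / m%:R.
have packets : RLC n m L M <= m%:R / n%:R * (n%:R - tau).
  apply: (RLC_le_on_cell t_lt_n cell_lo cell_hi); apply: RLC_pt_le_packets => //.
  exact: ltnW.
have slots : RLC n m L M <= L%:R / t.+1%:R * (n%:R - tau).
  apply: (RLC_le_on_cell t_lt_n cell_lo cell_hi).
    by apply: RLC_pt_le_slots; apply: ltnW.
  apply: le_trans (RLC_pt_le_slots t_lt_n) _.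
  rewrite ler_wpM2r ?subr_ge0 ?ler_nat // ler_pM2l ?ltr0n //.
  by rewrite lef_pV2 ?posrE ?ltr0n // ler_nat.
have tau_ge0 : 0 <= tau by rewrite /tau !mulr_ge0 ?invr_ge0 ?ler0n.
have tau_lt_t1 : tau < t.+1%:R by rewrite /tau ltr_pdivrMr // mulrC.
have tau_lt_n : tau < n%:R by rewrite /tau ltr_pdivrMr // ltr_pM2l.
have [X_le X_tau_le] : RLC n m L M <= L%:R * (n%:R - tau) /\
                       RLC n m L M * tau <= L%:R * (n%:R - tau).
  apply: (@below_scaled_bound _ _ _ _ t.+1%:R) => //.
  - by rewrite mulr_ge0 ?ler0n // subr_ge0 ltW.
  - by rewrite ler1n.
  - by rewrite -ler_pdivlMr ?ltr0n // mulrAC.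
have packetsE : m%:R / n%:R * (n%:R - tau) = m%:R - M.
  by rewrite /tau; field; rewrite ?m_neq0 ?n_neq0.
have slotsE : L%:R * (n%:R - tau) * m%:R = L%:R * n%:R * (m%:R - M).
  by rewrite /tau; field; rewrite ?m_neq0 ?n_neq0.
have slots_tauE : L%:R * (n%:R - tau) * m%:R / n%:R = L%:R * (m%:R - M).
  by rewrite /tau; field; rewrite ?m_neq0 ?n_neq0.
have tauE : RLC n m L M * M * n%:R = RLC n m L M * tau * m%:R.
  by rewrite /tau; field; rewrite ?m_neq0.
split.
- by rewrite -packetsE.
- by rewrite -slotsE ler_pM2r.
- by rewrite -slots_tauE ler_pdivlMr // tauE ler_pM2r.
Qed.

End MemorySharing.

Section LowerBound.
Variables (R : realFieldType) (n m L : nat) (M : R).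

Lemma Rlb_ge_ceil : (m%:R - M) / ((m + L.-1) %/ L)%N%:R <= Rlb n m L M.
Proof. exact: bigmax_ge_id. Qed.

Lemma Rlb_ge_slot (s : nat) : (1 <= s)%N -> (s <= minn (m %/ L) n)%N ->
  (L * s)%N%:R - s%:R * M / ((m %/ L) %/ s)%N%:R <= Rlb n m L M.
Proof.
move=> s_ge1 s_le; rewrite /Rlb.
apply: (le_bigmax_seq _ _ _
  (fun s => (L * s)%N%:R - s%:R * M / ((m %/ L) %/ s)%N%:R)) => //.
by rewrite mem_index_iota s_ge1 ltnS.
Qed.

End LowerBound.

(* For 1 <= s <= q and 4 s M <= q L the term L s - s M/floor(q/s) is at
   least L s/2, because q <= 2 s floor(q/s). *)
Lemma slot_term_ge_half (R : realFieldType) (L q s : nat) (M : R) :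
  (0 < L)%N -> (1 <= s <= q)%N -> 0 <= M ->
  4%:R * (s%:R * M) <= q%:R * L%:R ->
  L%:R * s%:R / 2%:R <= (L * s)%N%:R - s%:R * M / (q %/ s)%N%:R.
Proof.
move=> L_gt0 /andP[s_ge1 s_le_q] M_ge0 sM_small.
set k := (q %/ s)%N.
have k_gt0 : (0 < k)%N by rewrite divn_gt0 // (leq_trans _ s_ge1).
have q_le_2sk : (q <= 2 * s * k)%N.
  have : (q < s * k + s)%N by rewrite mulnC -mulSnr ltn_ceil // (leq_trans _ s_ge1).
  nia.
have q_le_2skR : (q%:R : R) <= 2%:R * s%:R * k%:R by rewrite -!natrM ler_nat.
have k_gt0R : (0 : R) < k%:R by rewrite ltr0n.
have s_gt0R : (0 : R) < s%:R by rewrite ltr0n (leq_trans _ s_ge1).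
have L_gt0R : (0 : R) < L%:R by rewrite ltr0n.
have M_small : 2%:R * M <= L%:R * k%:R by rewrite -(ler_pM2l s_gt0R); nra.
have : s%:R * M / k%:R <= L%:R * s%:R / 2%:R.
  by rewrite ler_pdivrMr // mulrAC ler_pdivlMr ?ltr0n //; nra.
by rewrite natrM; lra.
Qed.

Lemma exists_last_true (P : pred nat) (N : nat) : P 1%N -> (1 <= N)%N ->
  exists2 s, (1 <= s <= N)%N & P s && ((s == N) || ~~ P s.+1).
Proof.
move=> P1 N_ge1.
pose Q s := (1 <= s <= N)%N && P s.
have Q1 : exists s, Q s by exists 1%N; rewrite /Q N_ge1 P1.
have Q_le_N s : Q s -> (s <= N)%N by case/andP => /andP[].
case: (ex_maxnP Q1 Q_le_N) => s /andP[s_range Ps] s_max.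
exists s => //; rewrite Ps /=.
case: (ltngtP s N) => [s_lt_N|s_gt_N|] //=.
- apply/negP => Ps1.
  by have := s_max s.+1; rewrite /Q Ps1 s_lt_N andbT ltnn => /(_ isT).
- by case/andP: s_range => _; rewrite leqNgt s_gt_N.
Qed.

(* In the three comparison lemmas below X stands for R^LC(M), a for m, l for
   L and Rl for R^lb(M); c = ceil(m/L) and q = floor(m/L).
   Few slots, c <= 18: X <= m - M <= c Rl. *)
Lemma compare_small_ceil (R : realFieldType) (X a M Rl : R) (c : nat) :
  (0 < c <= 18)%N -> M <= a -> X <= a - M -> (a - M) / c%:R <= Rl ->
  X <= 18%:R * Rl.
Proof.
move=> /andP[c_gt0 c_le18] M_le_a X_le cut_le.
have c_gt0R : (0 : R) < c%:R by rewrite ltr0n.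
have cut : a - M <= c%:R * Rl by rewrite mulrC -ler_pdivrMr.
have Rl_ge0 : 0 <= Rl by apply: le_trans cut_le; rewrite divr_ge0 ?ler0n ?subr_ge0.
apply: le_trans X_le (le_trans cut _).
by rewrite ler_wpM2r // ler_nat.
Qed.

(* Large memory, a + l <= 18 M: X M c <= l c (a - M) < (a + l)(a - M), so
   X <= 18 (a - M)/c <= 18 Rl. *)
Lemma compare_large_memory (R : realFieldType) (X a l M Rl : R) (c : nat) :
  (0 < c)%N -> 0 < a -> 0 <= l -> M <= a ->
  c%:R * l <= a + l -> a + l <= 18%:R * M ->
  X * M <= l * (a - M) -> (a - M) / c%:R <= Rl ->
  X <= 18%:R * Rl.
Proof.
move=> c_gt0 a_gt0 l_ge0 M_le_a cl_le aL_le XM_le cut_le.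
have c_gt0R : (0 : R) < c%:R by rewrite ltr0n.
have M_gt0 : 0 < M by lra.
have Xc_le : X * c%:R <= 18%:R * (a - M).
  rewrite -(ler_pM2l M_gt0).
  have : X * M * c%:R <= l * (a - M) * c%:R by rewrite ler_wpM2r ?ler0n.
  nra.
apply: le_trans (_ : X <= 18%:R * ((a - M) / c%:R)) _.
  by rewrite mulrA ler_pdivlMr.
by rewrite ler_wpM2l ?ler0n.
Qed.

(* Small memory and many slots: pick the largest admissible s with
   4 s M <= q l; then Rl >= l s/2 and X <= 9 l s. *)
Lemma compare_small_memory (R : realFieldType) (X a l M Rl : R) (n q : nat) :
  (0 < n)%N -> (18 <= q)%N -> 0 < l -> 0 <= M ->
  q%:R * l <= a -> a < q%:R * l + l -> 18%:R * M < a + l ->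
  X <= a - M -> X * a <= l * n%:R * (a - M) -> X * M <= l * (a - M) ->
  (forall s : nat, (1 <= s <= minn q n)%N -> 4%:R * (s%:R * M) <= q%:R * l ->
     l * s%:R / 2%:R <= Rl) ->
  X <= 18%:R * Rl.
Proof.
move=> n_gt0 q_ge18 l_gt0 M_ge0 ql_le_a a_lt aL_gt X_le Xa_le XM_le slot_ge.
have q18 : 18%:R * l <= q%:R * l by rewrite ler_pM2r // ler_nat.
have a_gt0 : 0 < a by lra.
pose admissible (s : nat) := 4%:R * (s%:R * M) <= q%:R * l.
have adm1 : admissible 1%N by rewrite /admissible mul1r; lra.
have N_ge1 : (1 <= minn q n)%N by rewrite leq_min n_gt0 (leq_trans _ q_ge18).
have [s s_range /andP[adm_s s_last]] := @exists_last_true admissible _ adm1 N_ge1.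
have half := slot_ge s s_range adm_s.
suff X_le_9ls : X <= 9%:R * (l * s%:R) by lra.
case/orP: s_last => [/eqP s_N | not_adm].
- case: (leqP q n) => [q_le_n | n_lt_q].
  + (* s = q: X <= a < (q + 1) l <= 9 l q. *)
    by move: s_N; rewrite (minn_idPl q_le_n) => ->; rewrite [l * _]mulrC; lra.
  + (* s = n: X a <= l n (a - M) <= l n a. *)
    move: s_N; rewrite (minn_idPr (ltnW n_lt_q)) => ->.
    have ln_ge0 : 0 <= l * n%:R by rewrite mulr_ge0 ?ler0n ?ltW.
    have : X * a <= l * n%:R * a by apply: le_trans Xa_le _; nra.
    by rewrite ler_pM2r // => X_le_ln; lra.
- (* s + 1 is not admissible: a < (19/18) q l < 9 s M, and X M <= l a. *)
  have not_adm' : q%:R * l < 4%:R * (s%:R * M) + 4%:R * M.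
    move: not_adm; rewrite /admissible -ltNge -[s.+1%:R]natr1.
    by rewrite [(s%:R + 1) * M]mulrDl mul1r mulrDr.
  have s_ge1 : (1 : R) <= s%:R by rewrite ler1n; case/andP: s_range.
  have M_gt0 : 0 < M by nra.
  have a_le : a <= 9%:R * (s%:R * M) by nra.
  by rewrite -(ler_pM2r M_gt0); apply: le_trans XM_le _; nra.
Qed.

Lemma ceil_floor_bounds (m L : nat) : (0 < L)%N -> (0 < m)%N ->
  [/\ (0 < (m + L.-1) %/ L)%N, ((m + L.-1) %/ L * L < m + L)%N,
      (m %/ L * L <= m)%N, (m < (m %/ L).+1 * L)%N
    & (18 < (m + L.-1) %/ L)%N -> (18 <= m %/ L)%N].
Proof.
move=> L_gt0 m_gt0.
have c_le : ((m + L.-1) %/ L * L <= m + L.-1)%N by apply: leq_divM.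
split; [|lia|exact: leq_divM|exact: ltn_ceil|].
- by rewrite divn_gt0 //; lia.
- move=> c_gt18; rewrite -(mulnK 18 L_gt0) leq_div2r //.
  have : (19 * L <= (m + L.-1) %/ L * L)%N by rewrite leq_mul2r c_gt18 orbT.
  lia.
Qed.

Theorem theorem6 (R : realFieldType) (n m L : nat) (M : R) :
  (0 < n)%N -> (0 < m)%N -> (0 < L)%N -> (L <= m)%N ->
  0 <= M -> M < m%:R ->
  RLC n m L M / Rlb n m L M <= 18.
Proof.
move=> n_gt0 m_gt0 L_gt0 _ M_ge0 M_lt_m.
have [X_le Xm_le XM_le] := RLC_upper_bounds n_gt0 m_gt0 L_gt0 M_ge0 M_lt_m.
have [c_gt0 c_lt q_le q_gt c_large] := ceil_floor_bounds L_gt0 m_gt0.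
have cut := @Rlb_ge_ceil R n m L M.
have m_gt0R : (0 : R) < m%:R by rewrite ltr0n.
have L_gt0R : (0 : R) < L%:R by rewrite ltr0n.
have Rlb_gt0 : 0 < Rlb n m L M.
  by apply: lt_le_trans cut; rewrite divr_gt0 ?ltr0n ?subr_gt0.
rewrite ler_pdivrMr //.
case: (leP (m%:R + L%:R) (18%:R * M)) => [large_M | small_M].
  apply: (compare_large_memory c_gt0 m_gt0R (ltW L_gt0R) (ltW M_lt_m) _ large_M XM_le cut).
  by rewrite -natrM -natrD ler_nat; apply: ltnW.
case: (leqP ((m + L.-1) %/ L) 18) => [small_c | large_c].
  by apply: compare_small_ceil (ltW M_lt_m) X_le cut; rewrite c_gt0.
apply: (@compare_small_memory _ _ m%:R L%:R M _ n (m %/ L)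
          n_gt0 (c_large large_c) L_gt0R M_ge0) => //.
- by rewrite -natrM ler_nat.
- by rewrite -natrM -natrD -mulSnr ltr_nat.
- move=> s /andP[s_ge1 s_le_N] admissible.
  apply: le_trans (@Rlb_ge_slot R n m L M s s_ge1 s_le_N).
  apply: slot_term_ge_half => //.
  by rewrite s_ge1 (leq_trans s_le_N) ?geq_minl.
Qed.
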